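(* In the one-way trading setting with price elasticity, let $\pi\ge1$. For every input $\sigma=(g_1,\dots,g_T)$ and every $t\in[T]$, the output of CR-Pursuit($\pi$) satisfies $$\bar v_t\ \le\ c\,\frac{g_t(\bar v_t)}{p(t)},\qquad c=\frac{2}{1+\sqrt{1-1/\pi}}.$$
   Context: Fix $\Delta>0$, $0<m\le M$. Let $\mathcal G_{PE}$ be the set of functions $g(v)=(p-f(v))\,v$ on $[0,\Delta]$, where $p\in[m,M]$ and $f:[0,\Delta]\to[0,\infty)$ is convex and differentiable with $f(0)=0$ (so $g$ is concave, $g(0)=0$, $g'(0)=p$; $g$ need not be increasing). An input is a finite sequence $\sigma=(g_1,\dots,g_T)$ with $g_t(v)=(p(t)-f_t(v))v\in\mathcal G_{PE}$; $\sigma^{[1:t]}=(g_1,\dots,g_t)$ ($\sigma^{[1:0]}$ empty). $\eta_{OPT}(\sigma^{[1:t]})$ is the optimal value of $\max\sum_{s=1}^t g_s(v_s)$ s.t. $\sum_{s=1}^t v_s\le\Delta$, $v_s\ge0$ (and $0$ for the empty sequence). For $\pi\ge1$, CR-Pursuit($\pi$) outputs at time $t$ the smallest $\bar v_t\in[0,\Delta]$ with $g_t(\bar v_t)=\frac1\pi\big[\eta_{OPT}(\sigma^{[1:t]})-\eta_{OPT}(\sigma^{[1:t-1]})\big]$ (such a value exists since the right side lies between $0$ and $\max_{[0,\Delta]}g_t$). *)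

From Stdlib Require Import Reals Lra.
Open Scope R_scope.

Fixpoint sum1 (t : nat) (F : nat -> R) : R :=
  match t with
  | O => 0
  | S n => sum1 n F + F (S n)
  end.

Definition convex_on (D : R) (f : R -> R) : Prop :=
  forall x y l, 0 <= x <= D -> 0 <= y <= D -> 0 <= l <= 1 ->
    f (l * x + (1 - l) * y) <= l * f x + (1 - l) * f y.

(* differentiability of f on the closed interval [0, D]
   (one-sided at the endpoints: difference quotients taken within [0, D]) *)
Definition differentiable_on (D : R) (f : R -> R) : Prop :=
  forall x, 0 <= x <= D ->
    exists l, limit1_in (fun y => (f y - f x) / (y - x))
                        (fun y => 0 <= y <= D /\ y <> x) l x.

(* g belongs to G_PE: g(v) = (p - f(v)) v with p in [m, M],
   f : [0,D] -> [0,oo) convex, differentiable, f(0) = 0 *)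
Definition PE_params (D m M p : R) (f : R -> R) : Prop :=
  m <= p <= M /\
  (forall v, 0 <= v <= D -> 0 <= f v) /\
  convex_on D f /\ differentiable_on D f /\ f 0 = 0.

Definition gPE (p : R) (f : R -> R) (v : R) : R := (p - f v) * v.

Definition feasible (D : R) (t : nat) (v : nat -> R) : Prop :=
  (forall s, (1 <= s <= t)%nat -> 0 <= v s) /\ sum1 t v <= D.

Definition objective (p : nat -> R) (f : nat -> R -> R) (t : nat) (v : nat -> R) : R :=
  sum1 t (fun s => gPE (p s) (f s) (v s)).

(* eta is the optimal value eta_OPT(sigma^[1:t]) (supremum = maximum of the
   objective over feasible allocations; 0 for the empty prefix t = 0) *)
Definition is_eta_opt (D : R) (p : nat -> R) (f : nat -> R -> R) (t : nat) (eta : R) : Prop :=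
  is_lub (fun y => exists v, feasible D t v /\ y = objective p f t v) eta.

(* vbar is the output of CR-Pursuit(pi) at time t: the smallest value in
   [0, D] with g_t(vbar) = (eta_t - eta_{t-1}) / pi *)
Definition crp_output (D pi : R) (g : R -> R) (eta_t eta_tm1 vbar : R) : Prop :=
  0 <= vbar <= D /\ g vbar = / pi * (eta_t - eta_tm1) /\
  (forall w, 0 <= w <= D -> g w = / pi * (eta_t - eta_tm1) -> vbar <= w).

From Stdlib Require Import Reals Lra Lia Psatz.
Open Scope R_scope.

(* Write g = g_t, P = p(t), F = f_t(vbar), y = (eta_t - eta_{t-1})/pi and
   s = sqrt(1 - 1/pi).  The goal is equivalent to F <= P (1 - s)/2.
   1. g is continuous (differentiability), so by the intermediate value
      theorem and the minimality of vbar, g <= y on [0, vbar].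
   2. Convexity of f with f(0) = 0 makes f(v)/v nondecreasing, so g lies
      above the parabola q(v) = (P - v F/vbar) v on [0, vbar] and below it on
      [vbar, D].  Since q(vbar) = y, step 1 forces the vertex of q to lie to
      the right of vbar (2F <= P), and q <= P^2 vbar/(4F) bounds g everywhere.
   3. The optimum grows by at most max g from prefix t-1 to prefix t, hence
      4 F pi y <= P^2 vbar, i.e. 4 pi F (P - F) <= P^2; together with
      2F <= P this pins F below the smaller root P (1 - s)/2. *)

Definition continuous_on (D : R) (h : R -> R) : Prop :=
  forall x, 0 <= x <= D -> forall eps, 0 < eps -> exists del, 0 < del /\
    forall z, 0 <= z <= D -> Rabs (z - x) < del -> Rabs (h z - h x) < eps.

(* A function differentiable on [0, D] is continuous on [0, D]: near x its
   difference quotient stays within 1 of the derivative l. *)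
Lemma differentiable_continuous_on (D : R) (h : R -> R) :
  differentiable_on D h -> continuous_on D h.
Proof.
  intros hdiff x hx eps heps.
  destruct (hdiff x hx) as [l hl].
  destruct (hl 1 Rlt_0_1) as [alp [halp hquot]].
  assert (hL : 0 < Rabs l + 1) by (pose proof (Rabs_pos l); lra).
  exists (Rmin alp (eps / (Rabs l + 1))). split.
  { apply Rmin_pos; [lra | apply Rdiv_lt_0_compat; lra]. }
  intros z hz hzx.
  pose proof (Rmin_l alp (eps / (Rabs l + 1))) as hmin_l.
  pose proof (Rmin_r alp (eps / (Rabs l + 1))) as hmin_r.
  destruct (Req_dec z x) as [-> | hne].
  { unfold Rminus; rewrite Rplus_opp_r, Rabs_R0; lra. }
  assert (hclose : Rabs ((h z - h x) / (z - x) - l) < 1).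
  { apply hquot. split; [split; auto |]. simpl. unfold R_dist. lra. }
  assert (hbound : Rabs ((h z - h x) / (z - x)) < Rabs l + 1).
  { pose proof (Rabs_triang_inv ((h z - h x) / (z - x)) l). lra. }
  replace (h z - h x) with ((h z - h x) / (z - x) * (z - x)) by (field; lra).
  rewrite Rabs_mult.
  assert (hsmall : (Rabs l + 1) * Rabs (z - x) < eps).
  { apply Rmult_lt_reg_r with (/ (Rabs l + 1)); [apply Rinv_0_lt_compat; lra |].
    replace ((Rabs l + 1) * Rabs (z - x) * / (Rabs l + 1)) with (Rabs (z - x))
      by (field; lra).
    unfold Rdiv in hmin_r. lra. }
  pose proof (Rabs_pos (z - x)).
  apply Rle_lt_trans with ((Rabs l + 1) * Rabs (z - x)); [| exact hsmall].
  apply Rmult_le_compat_r; lra.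
Qed.

(* Projection of R onto [0, D]; composing with it turns continuity on [0, D]
   into continuity on R, so that the library IVT applies. *)
Definition clamp (D x : R) : R := Rmax 0 (Rmin D x).

Lemma clamp_in (D x : R) : 0 <= D -> 0 <= clamp D x <= D.
Proof. intros. unfold clamp, Rmax, Rmin. repeat destruct Rle_dec; lra. Qed.

Lemma clamp_id (D x : R) : 0 <= x <= D -> clamp D x = x.
Proof. intros. unfold clamp, Rmax, Rmin. repeat destruct Rle_dec; lra. Qed.

Lemma clamp_lipschitz (D x z : R) : Rabs (clamp D x - clamp D z) <= Rabs (x - z).
Proof.
  unfold clamp, Rmax, Rmin. repeat destruct Rle_dec;
  unfold Rabs; repeat destruct Rcase_abs; lra.
Qed.

Lemma continuity_clamp (D : R) : continuity (clamp D).
Proof.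
  intros z eps heps. exists eps. split; auto. intros x [_ hx].
  simpl in *. unfold R_dist in *. pose proof (clamp_lipschitz D x z). lra.
Qed.

Lemma continuity_clamped (D : R) (h : R -> R) :
  0 <= D -> continuous_on D h -> continuity (fun x => h (clamp D x)).
Proof.
  intros hD hcont z eps heps.
  destruct (hcont (clamp D z) (clamp_in D z hD) eps heps) as [del [hdel hclose]].
  exists del. split; auto. intros x [_ hx]. simpl in *. unfold R_dist in *.
  apply hclose; [apply clamp_in; auto |].
  pose proof (clamp_lipschitz D x z). lra.
Qed.

Lemma ivt_from_zero (k : R -> R) (v y : R) :
  continuity k -> 0 <= v -> k 0 < y < k v -> exists w, 0 <= w <= v /\ k w = y.
Proof.
  intros hk hv [hlo hhi].
  assert (hvpos : 0 < v) by (destruct (Req_dec v 0) as [-> |]; lra).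
  destruct (IVT (fun x => k x - y) 0 v) as [w [hw hkw]]; auto; try lra.
  { apply continuity_minus; [exact hk | apply continuity_const; intros ? ?; auto]. }
  exists w. split; auto. lra.
Qed.

Lemma convex_slope_mono (D : R) (f : R -> R) (u v : R) :
  convex_on D f -> f 0 = 0 -> 0 <= v <= u -> u <= D -> 0 < u -> u * f v <= v * f u.
Proof.
  intros hconv hf0 hv huD hu.
  assert (hl : 0 <= v / u <= 1).
  { split; [unfold Rdiv; apply Rmult_le_pos; [lra | left; apply Rinv_0_lt_compat; lra] |].
    apply Rmult_le_reg_r with u; [lra |]. field_simplify; lra. }
  pose proof (hconv u 0 (v / u) ltac:(lra) ltac:(lra) hl) as hchord.
  rewrite hf0 in hchord.
  replace (v / u * u + (1 - v / u) * 0) with v in hchord by (field; lra).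
  replace (v * f u) with (u * (v / u * f u + (1 - v / u) * 0)) by (field; lra).
  apply Rmult_le_compat_l; lra.
Qed.

Section FirstHit.

Variables (D P y vbar : R) (f : R -> R).
Hypotheses (hD : 0 < D) (hP : 0 < P)
  (hdiff : differentiable_on D f) (hconv : convex_on D f) (hf0 : f 0 = 0)
  (hF : 0 <= f vbar) (hy : 0 < y) (hvbar : 0 <= vbar <= D)
  (hhit : gPE P f vbar = y)
  (hfirst : forall w, 0 <= w <= D -> gPE P f w = y -> vbar <= w).

(* vbar > 0 because g(0) = 0 < y. *)
Lemma vbar_pos : 0 < vbar.
Proof.
  destruct (Req_dec vbar 0) as [hz |]; [| lra].
  rewrite hz in hhit. unfold gPE in hhit. lra.
Qed.

Lemma below_level (v : R) : 0 <= v <= vbar -> gPE P f v <= y.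
Proof.
  intros hv. apply Rnot_lt_le. intros habove.
  assert (hcont : continuity (fun x => gPE P f (clamp D x))).
  { unfold gPE. apply continuity_mult; [| apply continuity_clamp].
    apply continuity_minus; [apply continuity_const; intros ? ?; auto |].
    apply continuity_clamped; [lra | apply differentiable_continuous_on; exact hdiff]. }
  destruct (ivt_from_zero _ v y hcont) as [w [hw hgw]].
  { lra. }
  { rewrite !clamp_id by lra. unfold gPE at 1. lra. }
  rewrite clamp_id in hgw by lra.
  assert (vbar <= w) by (apply hfirst; [lra | exact hgw]).
  assert (w = v) by lra. subst w. lra.
Qed.

Lemma above_parabola (v : R) :
  0 <= v <= vbar -> v * (P * vbar - v * f vbar) <= vbar * gPE P f v.
Proof.
  intros hv. pose proof vbar_pos.
  pose proof (convex_slope_mono D f vbar v hconv hf0 hv ltac:(lra) vbar_pos).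
  unfold gPE. nra.
Qed.

Lemma below_parabola (w : R) :
  vbar <= w <= D -> vbar * gPE P f w <= w * (P * vbar - w * f vbar).
Proof.
  intros hw. pose proof vbar_pos.
  pose proof (convex_slope_mono D f w vbar hconv hf0 ltac:(lra) ltac:(lra) ltac:(lra)).
  unfold gPE. nra.
Qed.

(* The vertex P vbar / (2 f(vbar)) of the parabola lies right of vbar:
   otherwise g would exceed y = g(vbar) at the vertex, contradicting step 1. *)
Lemma half_price : 2 * f vbar <= P.
Proof.
  pose proof vbar_pos as hv. apply Rnot_lt_le. intros hbig.
  set (F := f vbar) in *.
  set (v0 := P * vbar / (2 * F)).
  assert (hv0 : v0 * (2 * F) = P * vbar) by (unfold v0; field; lra).
  assert (hv0pos : 0 < v0) by (unfold v0; apply Rdiv_lt_0_compat; nra).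
  assert (hv0lt : v0 < vbar) by nra.
  pose proof (above_parabola v0 ltac:(lra)) as hlow.
  pose proof (below_level v0 ltac:(lra)) as hup.
  assert (hyF : y = (P - F) * vbar) by (rewrite <- hhit; reflexivity).
  assert (hvertex : 4 * F * (v0 * (P * vbar - v0 * F)) = (P * vbar) * (P * vbar)).
  { replace (4 * F * (v0 * (P * vbar - v0 * F)))
      with (2 * (v0 * (2 * F)) * (P * vbar) - (v0 * (2 * F)) * (v0 * (2 * F))) by ring.
    rewrite hv0. ring. }
  assert (hsq : (P * vbar) * (P * vbar) <= 4 * F * (vbar * y)).
  { rewrite <- hvertex. apply Rmult_le_compat_l; [lra |].
    apply Rle_trans with (vbar * gPE P f v0); [exact hlow |].
    apply Rmult_le_compat_l; lra. }
  rewrite hyF in hsq.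
  assert (0 < vbar * vbar * ((P - 2 * F) * (P - 2 * F))) by
    (apply Rmult_lt_0_compat; nra).
  nra.
Qed.

(* The parabola's maximum bounds g on all of [0, D]. *)
Lemma global_bound (w : R) : 0 <= w <= D -> 4 * f vbar * gPE P f w <= P * P * vbar.
Proof.
  intros hw. pose proof vbar_pos as hv.
  set (F := f vbar) in *.
  assert (hyF : y = (P - F) * vbar) by (rewrite <- hhit; reflexivity).
  destruct (Rle_lt_dec w vbar) as [hle | hlt].
  - apply Rle_trans with (4 * F * y).
    { apply Rmult_le_compat_l; [lra | apply below_level; lra]. }
    rewrite hyF.
    assert (0 <= (P - 2 * F) * (P - 2 * F) * vbar) by
      (apply Rmult_le_pos; [apply Rle_0_sqr | lra]).
    lra.
  - assert (hvertex : 4 * F * (w * (P * vbar - w * F)) <= (P * vbar) * (P * vbar)).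
    { pose proof (Rle_0_sqr (P * vbar - 2 * F * w)). unfold Rsqr in *. lra. }
    apply Rmult_le_reg_r with vbar; [exact hv |].
    apply Rle_trans with (4 * F * (w * (P * vbar - w * F))); [| nra].
    replace (4 * F * gPE P f w * vbar) with (4 * F * (vbar * gPE P f w)) by ring.
    apply Rmult_le_compat_l; [lra | apply below_parabola; lra].
Qed.

(* Any G dominated by every upper bound of g on [0, D] satisfies the same
   bound (this is how the optimum increment will be controlled). *)
Lemma level_gap_bound (G : R) :
  (forall K, (forall w, 0 <= w <= D -> gPE P f w <= K) -> G <= K) ->
  4 * f vbar * G <= P * P * vbar.
Proof.
  intros hG. pose proof vbar_pos.
  destruct (Req_dec (f vbar) 0) as [hz | hnz].
  { rewrite hz. nra. }
  assert (hpos : 0 < 4 * f vbar) by lra.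
  apply Rmult_le_reg_l with (/ (4 * f vbar)); [apply Rinv_0_lt_compat; lra |].
  replace (/ (4 * f vbar) * (4 * f vbar * G)) with G by (field; lra).
  apply hG. intros w hw.
  apply Rmult_le_reg_l with (4 * f vbar); [lra |].
  replace (4 * f vbar * (/ (4 * f vbar) * (P * P * vbar))) with (P * P * vbar)
    by (field; lra).
  apply global_bound; exact hw.
Qed.

End FirstHit.

Lemma sum1_ext (n : nat) (F G : nat -> R) :
  (forall s, (1 <= s <= n)%nat -> F s = G s) -> sum1 n F = sum1 n G.
Proof.
  induction n as [| n IH]; intros hFG; simpl; auto.
  rewrite IH by (intros; apply hFG; lia). rewrite (hFG (S n)) by lia. reflexivity.
Qed.

Lemma sum1_nonneg (n : nat) (F : nat -> R) :
  (forall s, (1 <= s <= n)%nat -> 0 <= F s) -> 0 <= sum1 n F.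
Proof.
  induction n as [| n IH]; intros hF; simpl; [lra |].
  pose proof (IH (fun s hs => hF s ltac:(lia))). pose proof (hF (S n) ltac:(lia)). lra.
Qed.

Lemma feasible_restrict (D : R) (n : nat) (v : nat -> R) :
  feasible D (S n) v -> feasible D n v /\ 0 <= v (S n) <= D.
Proof.
  intros [hnn hsum]. simpl in hsum.
  assert (hlast : 0 <= v (S n)) by (apply hnn; lia).
  assert (hprefix : 0 <= sum1 n v) by (apply sum1_nonneg; intros; apply hnn; lia).
  split; [split; [intros; apply hnn; lia | lra] | lra].
Qed.

Lemma feasible_pad_zero (D : R) (p : nat -> R) (f : nat -> R -> R) (n : nat)
  (v : nat -> R) :
  feasible D n v ->
  let w := fun s => if Nat.eqb s (S n) then 0 else v s in
  feasible D (S n) w /\ objective p f (S n) w = objective p f n v.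
Proof.
  intros [hnn hsum] w.
  assert (hsame : forall s, (1 <= s <= n)%nat -> w s = v s).
  { intros s hs. unfold w. destruct (Nat.eqb_spec s (S n)); [lia | reflexivity]. }
  assert (hlast : w (S n) = 0) by (unfold w; rewrite Nat.eqb_refl; reflexivity).
  split; [split |].
  - intros s hs. destruct (Nat.eq_dec s (S n)) as [-> | hne]; [lra |].
    rewrite hsame by lia. apply hnn; lia.
  - simpl. rewrite (sum1_ext n w v hsame), hlast. lra.
  - unfold objective. simpl. rewrite hlast.
    rewrite (sum1_ext n _ (fun s => gPE (p s) (f s) (v s)))
      by (intros s hs; rewrite hsame by exact hs; reflexivity).
    unfold gPE. ring.
Qed.

Lemma eta_mono (D : R) (p : nat -> R) (f : nat -> R -> R) (n : nat) (e1 e2 : R) :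
  is_eta_opt D p f n e1 -> is_eta_opt D p f (S n) e2 -> e1 <= e2.
Proof.
  intros [_ hleast1] [hub2 _]. apply hleast1.
  intros z [v [hfeas ->]].
  destruct (feasible_pad_zero D p f n v hfeas) as [hfeas' hobj].
  rewrite <- hobj. apply hub2. eexists; split; [exact hfeas' | reflexivity].
Qed.

Lemma eta_increment_le (D : R) (p : nat -> R) (f : nat -> R -> R) (n : nat)
  (e1 e2 K : R) :
  is_eta_opt D p f n e1 -> is_eta_opt D p f (S n) e2 ->
  (forall w, 0 <= w <= D -> gPE (p (S n)) (f (S n)) w <= K) -> e2 - e1 <= K.
Proof.
  intros [hub1 _] [_ hleast2] hK.
  enough (e2 <= e1 + K) by lra.
  apply hleast2. intros z [v [hfeas ->]].
  destruct (feasible_restrict D n v hfeas) as [hfeas' hlast].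
  assert (objective p f n v <= e1) by (apply hub1; exists v; split; auto).
  pose proof (hK (v (S n)) hlast).
  unfold objective in *. simpl. lra.
Qed.

(* If 2F <= P and 4 pi F (P - F) <= P^2, then F is below the smaller root of
   4 pi F (P - F) = P^2, because (P - 2F)^2 >= (1 - 1/pi) P^2. *)
Lemma below_smaller_root (P F pi : R) :
  0 < P -> 0 <= F -> 2 * F <= P -> 1 <= pi -> 4 * pi * F * (P - F) <= P * P ->
  F <= P * (1 - sqrt (1 - 1 / pi)) / 2.
Proof.
  intros hP hF hhalf hpi hquad.
  set (s := sqrt (1 - 1 / pi)).
  assert (hs0 : 0 <= s) by apply sqrt_pos.
  assert (hs2 : s * s = 1 - / pi).
  { unfold s. rewrite sqrt_sqrt; [unfold Rdiv; ring |].
    assert (/ pi <= 1) by (rewrite <- Rinv_1; apply Rinv_le_contravar; lra).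
    unfold Rdiv. lra. }
  assert (hgap : s * s * (P * P) <= (P - 2 * F) * (P - 2 * F)).
  { rewrite hs2.
    assert (hdiv : 4 * F * (P - F) <= / pi * (P * P)).
    { apply Rmult_le_reg_l with pi; [lra |].
      replace (pi * (/ pi * (P * P))) with (P * P) by (field; lra). lra. }
    lra. }
  assert (s * P <= P - 2 * F) by nra.
  lra.
Qed.

Lemma ratio_from_price_bound (P F s v : R) :
  0 < P -> 0 <= s -> 0 <= v -> F <= P * (1 - s) / 2 ->
  v <= 2 / (1 + s) * ((P - F) * v / P).
Proof.
  intros hP hs hv hF.
  replace (2 / (1 + s) * ((P - F) * v / P)) with (v * (2 * (P - F) / ((1 + s) * P)))
    by (field; lra).
  rewrite <- (Rmult_1_r v) at 1. apply Rmult_le_compat_l; [exact hv |].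
  apply Rmult_le_reg_r with ((1 + s) * P); [nra |].
  field_simplify; nra.
Qed.

Theorem lemma14 (D m M pi : R) (T : nat) (p : nat -> R) (f : nat -> R -> R)
  (hD : 0 < D) (hm : 0 < m) (hmM : m <= M) (hpi : 1 <= pi)
  (hinput : forall s, (1 <= s <= T)%nat -> PE_params D m M (p s) (f s))
  (t : nat) (ht : (1 <= t <= T)%nat)
  (eta_t eta_tm1 vbar : R)
  (heta_t : is_eta_opt D p f t eta_t)
  (heta_tm1 : is_eta_opt D p f (t - 1) eta_tm1)
  (hout : crp_output D pi (gPE (p t) (f t)) eta_t eta_tm1 vbar) :
  vbar <= (2 / (1 + sqrt (1 - 1 / pi))) * (gPE (p t) (f t) vbar / p t).
Proof.
  destruct (hinput t ht) as [[hmP _] [hfnn [hconv [hdiff hf0]]]].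
  destruct t as [| n]; [lia |].
  replace (S n - 1)%nat with n in heta_tm1 by lia.
  destruct hout as [hvbar [hhit hfirst]].
  set (y := / pi * (eta_t - eta_tm1)) in *.
  assert (hP : 0 < p (S n)) by lra.
  assert (hgap : eta_t - eta_tm1 = pi * y) by (unfold y; field; lra).
  assert (hy : 0 <= y).
  { pose proof (eta_mono D p f n _ _ heta_tm1 heta_t).
    unfold y. apply Rmult_le_pos; [left; apply Rinv_0_lt_compat |]; lra. }
  destruct (Req_dec y 0) as [hy0 | hy0].
  - (* zero level: vbar = 0, the first root of g *)
    assert (vbar <= 0) by (apply hfirst; [lra | unfold gPE; rewrite hy0; ring]).
    replace vbar with 0 by lra. unfold gPE, Rdiv. lra.
  - assert (hv : 0 < vbar) by (apply (vbar_pos D (p (S n)) y _ (f (S n))); auto; lra).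
    assert (hhalf : 2 * f (S n) vbar <= p (S n))
      by (apply (half_price D _ y); auto; lra).
    assert (hlevel : 4 * f (S n) vbar * (eta_t - eta_tm1) <= p (S n) * p (S n) * vbar).
    { apply (level_gap_bound D _ y); auto; try lra.
      intros K hK. exact (eta_increment_le D p f n _ _ _ heta_tm1 heta_t hK). }
    rewrite hgap, <- hhit in hlevel. unfold gPE in hlevel.
    assert (hquad : 4 * pi * f (S n) vbar * (p (S n) - f (S n) vbar) <= p (S n) * p (S n)).
    { apply Rmult_le_reg_r with vbar; [exact hv | lra]. }
    apply ratio_from_price_bound; [lra | apply sqrt_pos | lra |].
    apply below_smaller_root; auto.
Qed.
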